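(* Let $q$ be a prime power and let $\Gamma$ be the set of roots in $\mathbb{F}_{q^3}$ of $X^{q^2}+X^q+X$. Then the polynomial $(X^q-X)\circ X^3=X^{3q}-X^3$ permutes $\Gamma$ (i.e. maps $\Gamma$ bijectively onto $\Gamma$) if and only if $q\equiv 2\pmod 3$. *)

From mathcomp Require Import all_boot all_order all_algebra all_field.
Set Implicit Arguments. Unset Strict Implicit. Unset Printing Implicit Defensive.
Import GRing.Theory.
Local Open Scope ring_scope.

Definition prime_power (q : nat) : Prop :=
  exists p k : nat, prime p /\ (0 < k)%N /\ q = (p ^ k)%N.

Definition Gamma (F : finFieldType) (q : nat) : {set F} :=
  [set x : F | x ^+ (q ^ 2) + x ^+ q + x == 0].

Definition permutes_set (T : finType) (f : T -> T) (A : {set T}) : Prop :=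
  [/\ {in A, forall x, f x \in A},
      {in A &, injective f} &
      {in A, forall y, exists2 x, x \in A & f x = y}].

From HB Require Import structures.
From mathcomp Require Import all_boot all_order all_algebra all_field.
From mathcomp Require Import ring zify.
Set Implicit Arguments. Unset Strict Implicit. Unset Printing Implicit Defensive.
Import GRing.Theory.
Local Open Scope ring_scope.

(* Let s be the Frobenius x |-> x^q, an automorphism of order 3 of F = F_{q^3}:
   Gamma is the kernel of the trace x + s x + s^2 x, and f x = s (x^3) - x^3
   maps F into Gamma.  If 3 | q, then 0 and 1 lie in Gamma and have the same
   image.  If q = 1 mod 3, a cube root of unity w <> 1 lies in F_q, and x, w x
   have the same image.  If q = 2 mod 3, cubing is injective and 3 <> 0.  For x
   in Gamma the elementary symmetric functions e2, e3 of x, s x, s^2 x lie in F_q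
   and x^3 = e3 - e2 x.  So if f x = f y, i.e. x^3 - y^3 is in F_q, then
   e2(x) x - e2(y) y is in F_q and has trace 0, hence vanishes; thus y = l x
   with l in F_q, and (1 - l^3) x^3 in F_q forces l = 1 or x = 0, since a
   trace-zero element with s-fixed cube is 0. *)

Section FrobeniusPower.
Variables (R : comNzRingType) (q : nat) (qR : [pchar R].-nat q).

Definition pFrobenius_pow of [pchar R].-nat q := fun x : R => x ^+ q.

Lemma pFrobenius_pow_is_nmod_morphism : nmod_morphism (pFrobenius_pow qR).
Proof.
split=> [|x y]; last exact: exprDn_pchar.
by case/andP: qR => q_gt0 _; rewrite /pFrobenius_pow expr0n gtn_eqF.
Qed.

Lemma pFrobenius_pow_is_monoid_morphism : monoid_morphism (pFrobenius_pow qR).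
Proof. by split=> [|x y]; [exact: expr1n | exact: exprMn]. Qed.

HB.instance Definition _ := GRing.isNmodMorphism.Build R R (pFrobenius_pow qR)
  pFrobenius_pow_is_nmod_morphism.
HB.instance Definition _ := GRing.isMonoidMorphism.Build R R (pFrobenius_pow qR)
  pFrobenius_pow_is_monoid_morphism.

End FrobeniusPower.

Lemma pchar_nat_dvdn (R : nzRingType) (r q : nat) :
  prime r -> [pchar R].-nat q -> (1 < q)%N -> (r %| q)%N = (r%:R == 0 :> R).
Proof.
move=> r_pr qR q_gt1; apply/idP/idP => [r_dvd_q | r0].
  have rR : r \in [pchar R].
    by apply: (pnatPpi qR); rewrite mem_primes r_pr (ltnW q_gt1).
  by rewrite pcharf0.
have rR : r \in [pchar R] by rewrite inE r_pr.
have /(pnatPpi qR) : pdiv q \in \pi(q) by rewrite pi_pdiv.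
by rewrite (pcharf_eq rR) => /eqP <-; exact: pdiv_dvd.
Qed.

Definition trace3 (R : ringType) (s : R -> R) x := x + s x + s (s x).

Section OrderThreeAutomorphism.
Variables (F : fieldType) (s : {rmorphism F -> F}).
Hypothesis s3 : forall x, s (s (s x)) = x.

Local Notation tr := (trace3 s).
Let e2 x := x * s x + s x * s (s x) + s (s x) * x.
Let e3 x := x * s x * s (s x).

Lemma trace3_sub_id x : tr (s x - x) = 0.
Proof. by rewrite /trace3 !rmorphB s3; ring. Qed.

Lemma trace3B x y : tr (x - y) = tr x - tr y.
Proof. by rewrite /trace3 !rmorphB; ring. Qed.

Lemma trace3_fixed_mul c x : s c = c -> tr (c * x) = c * tr x.
Proof. by move=> sc; rewrite /trace3 !rmorphM !sc; ring. Qed.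

Lemma e2_fixed x : s (e2 x) = e2 x.
Proof. by rewrite /e2 !rmorphD !rmorphM s3; ring. Qed.

Lemma e3_fixed x : s (e3 x) = e3 x.
Proof. by rewrite /e3 !rmorphM s3; ring. Qed.

Lemma cube_trace0 x : tr x = 0 -> x ^+ 3 = e3 x - e2 x * x.
Proof.
move=> trx; have -> : x ^+ 3 = x ^+ 2 * tr x - e2 x * x + e3 x.
  by rewrite /trace3 /e2 /e3; ring.
by rewrite trx; ring.
Qed.

Hypothesis three_neq0 : 3%:R != 0 :> F.

Lemma fixed_trace0_eq0 d : s d = d -> tr d = 0 -> d = 0.
Proof.
move=> sd; rewrite /trace3 !sd; have -> : d + d + d = 3%:R * d by ring.
by move/eqP; rewrite mulf_eq0 (negbTE three_neq0) => /eqP.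
Qed.

Hypothesis cube_inj : injective (fun x : F => x ^+ 3).

Lemma trace0_fixed_cube_eq0 x : tr x = 0 -> s (x ^+ 3) = x ^+ 3 -> x = 0.
Proof.
by move=> trx; rewrite rmorphXn => /cube_inj sx; exact: fixed_trace0_eq0.
Qed.

Lemma trace0_e2_mul_eq0 x : tr x = 0 -> e2 x * x = 0 -> x = 0.
Proof.
move=> trx /eqP; rewrite mulf_eq0 => /orP[/eqP e20 | /eqP //].
apply: trace0_fixed_cube_eq0; rewrite // cube_trace0 //.
by rewrite e20 mul0r subr0 e3_fixed.
Qed.

Lemma trace0_scale_cube_fixed l x : s l = l -> tr x = 0 ->
  s (x ^+ 3 - (l * x) ^+ 3) = x ^+ 3 - (l * x) ^+ 3 -> l * x = x.
Proof.
move=> sl trx; have [l1 | l1] := eqVneq (l ^+ 3) 1.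
  have -> : l = 1 by apply: cube_inj; rewrite /= l1 expr1n.
  by rewrite mul1r.
have -> : x ^+ 3 - (l * x) ^+ 3 = (1 - l ^+ 3) * x ^+ 3 by ring.
rewrite rmorphM rmorphB rmorph1 [s (l ^+ 3)]rmorphXn sl.
have l3B_neq0 : 1 - l ^+ 3 != 0 by rewrite subr_eq0 eq_sym.
by move/(mulfI l3B_neq0)/(trace0_fixed_cube_eq0 trx) ->; rewrite mulr0.
Qed.

Lemma trace0_cube_fixed_inj x y : tr x = 0 -> tr y = 0 ->
  s (x ^+ 3 - y ^+ 3) = x ^+ 3 - y ^+ 3 -> x = y.
Proof.
move=> trx try sxy; pose d := e2 x * x - e2 y * y.
have d_fixed : s d = d.
  have -> : d = e3 x - e3 y - (x ^+ 3 - y ^+ 3).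
    by rewrite (cube_trace0 trx) (cube_trace0 try) /d; ring.
  by rewrite rmorphB sxy rmorphB !e3_fixed.
have : tr d = 0.
  by rewrite trace3B !trace3_fixed_mul ?e2_fixed // trx try !mulr0 subrr.
move/(fixed_trace0_eq0 d_fixed)/eqP; rewrite subr_eq0 => /eqP e2xy.
have [e2yy0 | e2yy_neq0] := eqVneq (e2 y * y) 0.
  by rewrite (trace0_e2_mul_eq0 try e2yy0) (trace0_e2_mul_eq0 trx) // e2xy.
have e2y_neq0 : e2 y != 0 by apply: contraNneq e2yy_neq0 => ->; rewrite mul0r.
have yE : y = e2 x / e2 y * x by rewrite mulrAC e2xy mulrC mulKf.
rewrite yE in sxy *; apply/esym/(trace0_scale_cube_fixed _ trx sxy).
by rewrite rmorphM fmorphV !e2_fixed.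
Qed.

End OrderThreeAutomorphism.

Section FiniteField.
Variable F : finFieldType.

Lemma exists_expf_neq m : (1 < m < #|F|)%N -> exists z : F, z ^+ m != z.
Proof.
case/andP=> m_gt1 m_lt_F; pose P : {poly F} := 'X^m - 'X.
have sizeP : size P = m.+1.
  by rewrite /P size_polyDl size_polyXn // size_polyN size_polyX.
have P_neq0 : P != 0 by rewrite -size_poly_eq0 sizeP.
have [z zP | all_fixed] := pickP (fun z : F => z ^+ m != z); first by exists z.
have : all (root P) (enum F).
  apply/allP => z _; rewrite rootE /P !hornerE subr_eq0.
  by move: (all_fixed z) => /negbFE.
move/(max_poly_roots P_neq0)/(_ (enum_uniq _)).
by rewrite sizeP -cardE ltnS leqNgt m_lt_F.
Qed.

Lemma expf_card_pred (x : F) : x != 0 -> x ^+ #|F|.-1 = 1.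
Proof.
move=> x_neq0; apply: (mulIf x_neq0).
by rewrite -exprSr prednK ?expf_card ?mul1r // ltnW // finNzRing_gt1.
Qed.

Lemma expf_card_iter (x : F) k : x ^+ (k * #|F|.-1).+1 = x.
Proof.
elim: k => [|k IHk]; first exact: expr1.
rewrite mulSn -addnS exprD IHk -exprSr prednK ?expf_card //.
by rewrite ltnW // finNzRing_gt1.
Qed.

Lemma expf_inj_coprime d :
  (0 < d)%N -> coprime d #|F|.-1 -> injective (fun x : F => x ^+ d).
Proof.
move=> d_gt0 /eqP dF; have [a b Eab _] := egcdnP #|F|.-1 d_gt0.
apply: (can_inj (g := fun y : F => y ^+ a)) => x /=.
by rewrite -exprM mulnC Eab dF addn1 expf_card_iter.
Qed.

Lemma exists_root1_neq1 d :
  (1 < d)%N -> (d %| #|F|.-1)%N -> exists2 w : F, w ^+ d = 1 & w != 1.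
Proof.
move=> d_gt1 /dvdnP[n Fn]; have F_gt1 : (1 < #|F|)%N := finNzRing_gt1 F.
have n_gt0 : (0 < n)%N by case: n Fn => // Fn; rewrite mul0n in Fn; lia.
have n2_le_nd : (n * 2 <= n * d)%N by rewrite leq_mul2l d_gt1 orbT.
have [z zP] : exists z : F, z ^+ n.+1 != z by apply: exists_expf_neq; lia.
have z_neq0 : z != 0 by apply: contraNneq zP => ->; rewrite expr0n.
exists (z ^+ n); first by rewrite -exprM -Fn expf_card_pred.
by apply: contraNneq zP => zn1; rewrite exprS zn1 mulr1.
Qed.

End FiniteField.

Lemma inj_permutes_set (T : finType) (f : T -> T) (A : {set T}) :
  {in A, forall x, f x \in A} -> {in A &, injective f} -> permutes_set f A.
Proof.
move=> fA f_inj; split=> // y yA.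
have fAA : f @: A \subset A by apply/subsetP => _ /imsetP[x xA ->]; exact: fA.
have /eqP fAE : f @: A == A by rewrite eqEcard fAA (card_in_imset f_inj) leqnn.
have : y \in f @: A by rewrite fAE.
by case/imsetP=> x xA ->; exists x.
Qed.

Section Gamma.
Variables (F : finFieldType) (q : nat).
Hypotheses (qF : [pchar F].-nat q) (cardF : #|F| = (q ^ 3)%N).

Local Notation s := (pFrobenius_pow qF).
Local Notation f := (fun x : F => x ^+ (3 * q) - x ^+ 3).

Lemma q_gt1 : (1 < q)%N.
Proof. by rewrite -(ltn_exp2r _ _ (isT : 0 < 3)%N) -cardF finNzRing_gt1. Qed.

Lemma pFrobenius_pow3 x : s (s (s x)) = x.
Proof.
have qqq : (q * (q * q) = #|F|)%N by rewrite cardF !expnS expn0 muln1.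
by rewrite /pFrobenius_pow -!exprM qqq expf_card.
Qed.

Lemma expr3qE x : x ^+ (3 * q) = s (x ^+ 3).
Proof. exact: exprM. Qed.

Lemma in_Gamma x : (x \in Gamma F q) = (trace3 s x == 0).
Proof.
by rewrite inE /trace3 /pFrobenius_pow -exprM mulnn; congr (_ == 0); ring.
Qed.

Lemma pFrobenius_pow_sub_in_Gamma y : s y - y \in Gamma F q.
Proof. by rewrite in_Gamma (trace3_sub_id pFrobenius_pow3). Qed.

Lemma expr3q_sub_in_Gamma x : x ^+ (3 * q) - x ^+ 3 \in Gamma F q.
Proof. by rewrite expr3qE pFrobenius_pow_sub_in_Gamma. Qed.

Lemma dvdn_card_pred_mod3 : (3 %| #|F|.-1)%N = (q %% 3 == 1)%N.
Proof.
rewrite cardF -subn1 -eqn_mod_dvd ?expn_gt0 ?(ltnW q_gt1) // -modnXm.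
by case: (q %% 3)%N (ltn_mod q 3) => [|[|[|r]]].
Qed.

Lemma dvd3_Gamma_not_inj : (3 %| q)%N -> ~ {in Gamma F q &, injective f}.
Proof.
move=> dvd3 f_inj; have three0 : 3%:R = 0 :> F.
  by apply/eqP; rewrite -(pchar_nat_dvdn _ qF q_gt1).
have G1 : (1 : F) \in Gamma F q.
  by rewrite in_Gamma /trace3 !rmorph1 -three0; apply/eqP; ring.
have G0 : (0 : F) \in Gamma F q by rewrite in_Gamma /trace3 !rmorph0 !addr0.
suff : (1 : F) = 0 by move/eqP; rewrite oner_eq0.
by apply: f_inj; rewrite //= !expr3qE expr1n expr0n rmorph1 rmorph0 !subrr.
Qed.

Lemma mod3_eq1_Gamma_not_inj : (q %% 3 = 1)%N -> ~ {in Gamma F q &, injective f}.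
Proof.
move=> q1 f_inj; have [w w3 w_neq1] : exists2 w : F, w ^+ 3 = 1 & w != 1.
  by apply: exists_root1_neq1; rewrite ?dvdn_card_pred_mod3 ?q1.
have sw : s w = w by rewrite /pFrobenius_pow -(expr_mod q w3) q1.
have [z sz] : exists z : F, z ^+ q != z.
  by apply: exists_expf_neq; rewrite q_gt1 cardF -{1}(expn1 q) ltn_exp2l ?q_gt1.
have xG := pFrobenius_pow_sub_in_Gamma z; set x := s z - z in xG.
have x_neq0 : x != 0 by rewrite subr_eq0.
have wxG : w * x \in Gamma F q.
  by move: xG; rewrite !in_Gamma (trace3_fixed_mul _ sw) => /eqP ->; rewrite mulr0.
have : w * x = x by apply: f_inj; rewrite //= !expr3qE exprMn w3 mul1r.
by move/eqP; rewrite -{2}[x]mul1r (inj_eq (mulIf x_neq0)) (negbTE w_neq1).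
Qed.

Lemma Gamma_inj_mod3_eq2 : {in Gamma F q &, injective f} -> (q %% 3 = 2)%N.
Proof.
move=> f_inj; case E: (q %% 3)%N (ltn_mod q 3) => [|[|[|r]]] // _.
  by case: (dvd3_Gamma_not_inj _ f_inj); rewrite /dvdn E.
by case: (mod3_eq1_Gamma_not_inj E f_inj).
Qed.

Lemma mod3_eq2_Gamma_inj : (q %% 3 = 2)%N -> {in Gamma F q &, injective f}.
Proof.
move=> q2 x y; rewrite !in_Gamma => /eqP trx /eqP try.
rewrite /= !expr3qE => fxy.
apply: (trace0_cube_fixed_inj pFrobenius_pow3 _ _ trx try).
- by rewrite -(pchar_nat_dvdn _ qF q_gt1) // /dvdn q2.
- by apply: expf_inj_coprime; rewrite // prime_coprime // dvdn_card_pred_mod3 q2.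
- by rewrite rmorphB /= -[s (x ^+ 3)](subrK (x ^+ 3)) fxy; ring.
Qed.

End Gamma.

Theorem theorem1p7 (q : nat) (F : finFieldType) :
  prime_power q -> #|F| = (q ^ 3)%N ->
  (permutes_set (fun x : F => x ^+ (3 * q) - x ^+ 3) (Gamma F q)
   <-> (q %% 3 = 2)%N).
Proof.
move=> [p [k [p_pr [_ qE]]]] cardF.
have qF : [pchar F].-nat q.
  have pF : p \in [pchar F].
    by apply: (@card_finPcharP _ p (k * 3)); rewrite // cardF qE expnM.
  by rewrite qE pnatX (pnatE _ p_pr) pF.
split=> [[_ f_inj _] | q2]; first exact: Gamma_inj_mod3_eq2 f_inj.
apply: inj_permutes_set (mod3_eq2_Gamma_inj qF cardF q2).
by move=> x _; exact: expr3q_sub_in_Gamma.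
Qed.
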